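(* In the Schwarzschild spacetime with line element $$ds^2=-\left(1-\frac{2m}{r}\right)dt^2+\left(1-\frac{2m}{r}\right)^{-1}dr^2+r^2\left(d\theta^2+\sin^2\theta\, d\varphi^2\right)$$ ($m>0$, $r>2m$, $0<\theta<\pi$), consider a test particle on an equatorial circular geodesic orbit of radius $r_1>3m$, with 4-velocity $$U'=\left(\sqrt{\frac{r_1}{r_1-3m}},\,0,\,0,\,\frac{1}{r_1}\sqrt{\frac{m}{r_1-3m}}\right)$$ in coordinates $(t,r,\theta,\varphi)$. Let $\beta$ be any stationary observer (constant $r,\theta,\varphi$) with 4-velocity field $U=\left(1-\frac{2m}{r}\right)^{-1/2}\frac{\partial}{\partial t}$. For any event $p$ of $\beta$ and any event $q$ of the test particle joined to $p$ by a spacelike geodesic segment orthogonal to $U_p$ at $p$, the kinematic relative velocity $v_{\mathrm{kin}}$ of $U'_q$ with respect to $U_p$ satisfies $$\|v_{\mathrm{kin}}\|^2=\frac{m}{r_1-2m};$$ in particular, it is constant along $\beta$ and independent of the chosen stationary observer.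
   Context: Signature $(-,+,+,+)$, $c=1$; for spacelike $x$, $\|x\|=g(x,x)^{1/2}$. Given an observer $u$ (future-pointing unit timelike vector) at $p$, a test particle with 4-velocity $u'$ at $q$, and a spacelike geodesic segment $\psi$ from $p$ to $q$ orthogonal to $u$ at $p$, let $\tau_{qp}$ be parallel transport from $q$ to $p$ along $\psi$. The kinematic relative velocity of $u'$ with respect to $u$ is $v_{\mathrm{kin}}=\frac{1}{-g(\tau_{qp}u',u)}\tau_{qp}u'-u$. *)

From Stdlib Require Import Reals Lra.
From Coquelicot Require Import Coquelicot.
Open Scope R_scope.

(* Coordinates (t, r, theta, phi) are indices 0,1,2,3.  Points and tangent
   vectors are given by their coordinate components  nat -> R  (only
   indices 0..3 matter). *)
Definition coords := nat -> R.

Definition sum4 (f : nat -> R) : R := f 0%nat + f 1%nat + f 2%nat + f 3%nat.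

Definition gdiag (m : R) (x : coords) (a : nat) : R :=
  match a with
  | 0%nat => - (1 - 2 * m / x 1%nat)
  | 1%nat => / (1 - 2 * m / x 1%nat)
  | 2%nat => (x 1%nat) ^ 2
  | 3%nat => (x 1%nat) ^ 2 * (sin (x 2%nat)) ^ 2
  | _ => 0
  end.

Definition gmet (m : R) (x : coords) (a b : nat) : R :=
  if Nat.eqb a b then gdiag m x a else 0.

Definition ginner (m : R) (x : coords) (u v : coords) : R :=
  sum4 (fun a => gdiag m x a * u a * v a).

Definition upd (x : coords) (c : nat) (h : R) : coords :=
  fun i => if Nat.eqb i c then h else x i.

Definition dg (m : R) (x : coords) (c a b : nat) : R :=
  Derive (fun h => gmet m (upd x c h) a b) (x c).

(* Christoffel symbols of the Levi-Civita connection,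
   Gamma^a_bc = 1/2 g^{aa} (d_b g_ac + d_c g_ab - d_a g_bc)
   (the inverse metric is diagonal with g^{aa} = 1/g_aa). *)
Definition Chr (m : R) (x : coords) (a b c : nat) : R :=
  / 2 * / gdiag m x a * (dg m x b a c + dg m x c a b - dg m x a b c).

Definition in_domain (m : R) (x : coords) : Prop :=
  2 * m < x 1%nat /\ 0 < x 2%nat < PI.

Definition is_geodesic_segment (m : R) (gam vel acc : R -> coords) : Prop :=
  forall s, 0 <= s <= 1 ->
    in_domain m (gam s) /\
    forall a, (a < 4)%nat ->
      is_derive (fun u => gam u a) s (vel s a) /\
      is_derive (fun u => vel u a) s (acc s a) /\
      acc s a + sum4 (fun b => sum4 (fun c =>
                  Chr m (gam s) a b c * vel s b * vel s c)) = 0.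

Definition is_parallel_along (m : R) (gam vel V : R -> coords) : Prop :=
  forall s, 0 <= s <= 1 ->
    forall a, (a < 4)%nat ->
      exists dV : R,
        is_derive (fun u => V u a) s dV /\
        dV + sum4 (fun b => sum4 (fun c =>
               Chr m (gam s) a b c * vel s b * V s c)) = 0.

Definition Ustat (m : R) (x : coords) : coords :=
  fun a => if Nat.eqb a 0 then / sqrt (1 - 2 * m / x 1%nat) else 0.

Definition Ucirc (m r1 : R) : coords :=
  fun a => match a with
           | 0%nat => sqrt (r1 / (r1 - 3 * m))
           | 3%nat => / r1 * sqrt (m / (r1 - 3 * m))
           | _ => 0
           end.

(* kinematic relative velocity of u' (already transported to p) w.r.t. u at p *)
Definition vkin (m : R) (p : coords) (tu' u : coords) : coords :=
  fun a => / (- ginner m p tu' u) * tu' a - u a.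

From Stdlib Require Import Reals Lra Lia.
From Coquelicot Require Import Coquelicot.
Open Scope R_scope.

(* Write f = 1 - 2m/r.  A spacelike geodesic leaving p orthogonally to the static
   observer has conserved energy g(gam', d_t) = -f dt/ds, which vanishes at p, so the
   geodesic stays in the slice t = const.  Along such a curve the static field
   U = f^(-1/2) d_t is parallel, and the Levi-Civita connection preserves g, so
   g(tau U', tau U') = -1 and g(tau U', U_p) = g(U'_q, U_q) = -gamma with
   gamma^2 = (r1 - 2m)/(r1 - 3m).  Hence |v_kin|^2 = 1 - 1/gamma^2 = m/(r1 - 2m). *)

Lemma is_derive_replace (f : R -> R) (x l l' : R) :
  is_derive f x l -> l = l' -> is_derive f x l'.
Proof. intros H <-; exact H. Qed.

Lemma is_derive_sum4 (F : nat -> R -> R) (dF : nat -> R) (s : R) :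
  (forall a, (a < 4)%nat -> is_derive (F a) s (dF a)) ->
  is_derive (fun u => sum4 (fun a => F a u)) s (sum4 dF).
Proof.
intros H. unfold sum4.
apply (is_derive_plus (fun u => F 0%nat u + F 1%nat u + F 2%nat u) (F 3%nat)); [|apply H; lia].
apply (is_derive_plus (fun u => F 0%nat u + F 1%nat u) (F 2%nat)); [|apply H; lia].
apply (is_derive_plus (F 0%nat) (F 1%nat)); apply H; lia.
Qed.

Lemma zero_derivative_const01 (f : R -> R) :
  (forall s, 0 <= s <= 1 -> is_derive f s 0) -> forall s, 0 <= s <= 1 -> f s = f 0.
Proof.
intros Hd s Hs.
destruct (Req_dec s 0) as [->|Hs0]; [reflexivity|].
destruct (MVT_gen f 0 s (fun _ => 0)) as [c [_ Hc]].
- intros x Hx. rewrite Rmin_left, Rmax_right in Hx by lra. apply Hd; lra.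
- intros x Hx. rewrite Rmin_left, Rmax_right in Hx by lra.
  apply continuity_pt_filterlim, (@ex_derive_continuous R_AbsRing R_NormedModule).
  exists 0. apply Hd; lra.
- lra.
Qed.

Lemma schw_factor_pos (m r : R) : 0 < m -> 2 * m < r -> 0 < 1 - 2 * m / r.
Proof.
intros hm hr. apply Rlt_0_minus. apply (Rmult_lt_reg_r r); [lra|]. field_simplify; lra.
Qed.

Lemma gdiag_neq0 (m : R) (x : coords) (a : nat) :
  0 < m -> in_domain m x -> (a < 4)%nat -> gdiag m x a <> 0.
Proof.
intros hm [hr hth] Ha.
assert (hf := schw_factor_pos m (x 1%nat) hm hr).
assert (hsin : 0 < sin (x 2%nat)) by (apply sin_gt_0; lra).
destruct a as [|[|[|[|a]]]]; cbn [gdiag]; try lia.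
- lra.
- apply Rinv_neq_0_compat; lra.
- apply pow_nonzero; lra.
- apply Rmult_integral_contrapositive; split; apply pow_nonzero; lra.
Qed.

Lemma dg_offdiag (m : R) (x : coords) (c a b : nat) : a <> b -> dg m x c a b = 0.
Proof.
intros Hab. apply Nat.eqb_neq in Hab. unfold dg, gmet. rewrite Hab. apply Derive_const.
Qed.

Lemma metric_compatible (m : R) (x u V W : coords) :
  (forall a, (a < 4)%nat -> gdiag m x a <> 0) ->
  sum4 (fun a => gdiag m x a *
     (sum4 (fun b => sum4 (fun c => Chr m x a b c * u b * V c)) * W a
      + V a * sum4 (fun b => sum4 (fun c => Chr m x a b c * u b * W c))))
  = sum4 (fun a => sum4 (fun b => dg m x b a a * u b) * V a * W a).
Proof.
intros Hg. unfold sum4, Chr.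
repeat match goal with
  | |- context [dg m x ?c ?a ?b] =>
      assert_fails constr_eq a b; rewrite (dg_offdiag m x c a b) by discriminate
  end.
field. repeat split; apply Hg; lia.
Qed.

Definition schw_dg (m : R) (x : coords) (c a b : nat) : R :=
  match c, a, b with
  | 1%nat, 0%nat, 0%nat => - (2 * m / x 1%nat ^ 2)
  | 1%nat, 1%nat, 1%nat => - (2 * m / x 1%nat ^ 2) / (1 - 2 * m / x 1%nat) ^ 2
  | 1%nat, 2%nat, 2%nat => 2 * x 1%nat
  | 1%nat, 3%nat, 3%nat => 2 * x 1%nat * sin (x 2%nat) ^ 2
  | 2%nat, 3%nat, 3%nat => x 1%nat ^ 2 * (2 * sin (x 2%nat) * cos (x 2%nat))
  | _, _, _ => 0
  end.

Lemma dg_schw (m : R) (x : coords) (c a b : nat) :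
  0 < m -> 2 * m < x 1%nat -> dg m x c a b = schw_dg m x c a b.
Proof.
intros hm hr.
assert (hf := schw_factor_pos m (x 1%nat) hm hr).
assert (h0 : x 1%nat <> 0) by lra.
unfold dg, gmet, upd.
destruct c as [|[|[|[|c]]]]; destruct a as [|[|[|[|a]]]]; destruct b as [|[|[|[|b]]]];
  simpl; apply is_derive_unique; auto_derive; repeat split; try lra; field; lra.
Qed.

Definition is_curve_in_domain (m : R) (gam vel : R -> coords) : Prop :=
  forall s, 0 <= s <= 1 ->
    in_domain m (gam s) /\
    forall a, (a < 4)%nat -> is_derive (fun u => gam u a) s (vel s a).

Lemma geodesic_curve (m : R) (gam vel acc : R -> coords) :
  is_geodesic_segment m gam vel acc -> is_curve_in_domain m gam vel.
Proof. intros Hg s Hs. destruct (Hg s Hs) as [Hx Ha]. split; [exact Hx|]. apply Ha. Qed.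

Lemma geodesic_velocity_parallel (m : R) (gam vel acc : R -> coords) :
  is_geodesic_segment m gam vel acc -> is_parallel_along m gam vel vel.
Proof.
intros Hg s Hs a Ha. destruct (Hg s Hs) as [_ Hd]. destruct (Hd a Ha) as [_ [Hacc E]].
exists (acc s a). split; [exact Hacc | exact E].
Qed.

Lemma parallel_derive (m : R) (gam vel V : R -> coords) (s : R) (a : nat) :
  is_parallel_along m gam vel V -> 0 <= s <= 1 -> (a < 4)%nat ->
  is_derive (fun u => V u a) s
    (- sum4 (fun b => sum4 (fun c => Chr m (gam s) a b c * vel s b * V s c))).
Proof.
intros HV Hs Ha. destruct (HV s Hs a Ha) as [dV [HdV E]].
apply (is_derive_replace _ _ _ _ HdV). lra.
Qed.

Lemma gdiag_derive_along (m : R) (gam vel : R -> coords) (s : R) (a : nat) :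
  0 < m -> is_curve_in_domain m gam vel -> 0 <= s <= 1 -> (a < 4)%nat ->
  is_derive (fun u => gdiag m (gam u) a) s
    (sum4 (fun b => dg m (gam s) b a a * vel s b)).
Proof.
intros hm Hc Hs Ha. destruct (Hc s Hs) as [[hr _] Hd].
assert (hf := schw_factor_pos m (gam s 1%nat) hm hr).
pose (r u := gam u 1%nat). pose (th u := gam u 2%nat).
assert (Dr : Derive (fun u => gam u 1%nat) s = vel s 1%nat)
  by (apply is_derive_unique, Hd; lia).
assert (Dth : Derive (fun u => gam u 2%nat) s = vel s 2%nat)
  by (apply is_derive_unique, Hd; lia).
assert (Er : ex_derive r s) by (eexists; apply Hd; lia).
assert (Eth : ex_derive th s) by (eexists; apply Hd; lia).
unfold sum4. rewrite !dg_schw by assumption.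
destruct a as [|[|[|[|a]]]]; try lia; eapply is_derive_ext;
  try (intro u; cbn [gdiag]; change (gam u 1%nat) with (r u);
       change (gam u 2%nat) with (th u); reflexivity);
  auto_derive; try (repeat split; auto; unfold r; lra);
  unfold r, th; rewrite ?Dr, ?Dth; cbn [schw_dg]; field; lra.
Qed.

Lemma ginner_derive_along (m : R) (gam vel V W : R -> coords) (dV dW : nat -> R) (s : R) :
  0 < m -> is_curve_in_domain m gam vel -> 0 <= s <= 1 ->
  (forall a, (a < 4)%nat -> is_derive (fun u => V u a) s (dV a)) ->
  (forall a, (a < 4)%nat -> is_derive (fun u => W u a) s (dW a)) ->
  is_derive (fun u => ginner m (gam u) (V u) (W u)) s
    (sum4 (fun a => sum4 (fun b => dg m (gam s) b a a * vel s b) * V s a * W s a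
                    + gdiag m (gam s) a * (dV a * W s a + V s a * dW a))).
Proof.
intros hm Hc Hs HV HW.
apply (is_derive_sum4 (fun a u => gdiag m (gam u) a * V u a * W u a)).
intros a Ha. cbv beta.
eapply is_derive_replace.
{ apply Derive.is_derive_mult; [apply Derive.is_derive_mult|]; [|apply HV, Ha|apply HW, Ha].
  apply (gdiag_derive_along m gam vel); assumption. }
cbv beta. ring.
Qed.

Lemma ginner_parallel_const (m : R) (gam vel V W : R -> coords) :
  0 < m -> is_curve_in_domain m gam vel ->
  is_parallel_along m gam vel V -> is_parallel_along m gam vel W ->
  forall s, 0 <= s <= 1 -> ginner m (gam s) (V s) (W s) = ginner m (gam 0) (V 0) (W 0).
Proof.
intros hm Hc HV HW. apply zero_derivative_const01. intros s Hs.
eapply is_derive_replace.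
{ apply (ginner_derive_along m gam vel); try assumption;
    intros a Ha; apply (parallel_derive m gam vel); assumption. }
destruct (Hc s Hs) as [Hx _].
assert (Hmc := metric_compatible m (gam s) (vel s) (V s) (W s)
                 (fun a Ha => gdiag_neq0 m (gam s) a hm Hx Ha)).
unfold sum4 in *. lra.
Qed.

Lemma Chr_time_contract (m : R) (x u w : coords) :
  0 < m -> 2 * m < x 1%nat ->
  sum4 (fun b => sum4 (fun c => Chr m x 0 b c * u b * w c))
  = m / (x 1%nat * (x 1%nat - 2 * m)) * (u 1%nat * w 0%nat + u 0%nat * w 1%nat).
Proof.
intros hm hr. assert (hf := schw_factor_pos m (x 1%nat) hm hr).
unfold sum4, Chr. rewrite !dg_schw by assumption. cbn [schw_dg gdiag].
field. split; lra.
Qed.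

Lemma geodesic_energy_const (m : R) (gam vel acc : R -> coords) :
  0 < m -> is_geodesic_segment m gam vel acc ->
  forall s, 0 <= s <= 1 ->
    gdiag m (gam s) 0 * vel s 0%nat = gdiag m (gam 0) 0 * vel 0 0%nat.
Proof.
intros hm Hg. assert (Hc := geodesic_curve m gam vel acc Hg).
apply zero_derivative_const01. intros s Hs.
eapply is_derive_replace.
{ apply Derive.is_derive_mult.
  - apply (gdiag_derive_along m gam vel); auto.
  - apply (parallel_derive m gam vel vel); auto.
    exact (geodesic_velocity_parallel m gam vel acc Hg). }
destruct (Hc s Hs) as [[hr _] _].
assert (hf := schw_factor_pos m (gam s 1%nat) hm hr).
rewrite Chr_time_contract by assumption.
unfold sum4. rewrite !dg_schw by assumption. cbn [schw_dg gdiag].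
field. split; lra.
Qed.

Lemma geodesic_static_slice (m : R) (gam vel acc : R -> coords) :
  0 < m -> is_geodesic_segment m gam vel acc -> vel 0 0%nat = 0 ->
  forall s, 0 <= s <= 1 -> vel s 0%nat = 0.
Proof.
intros hm Hg H0 s Hs.
assert (HE := geodesic_energy_const m gam vel acc hm Hg s Hs).
rewrite H0, Rmult_0_r in HE.
destruct (Hg s Hs) as [Hx _].
destruct (Rmult_integral _ _ HE) as [Hz|Hz]; [|exact Hz].
exfalso. exact (gdiag_neq0 m (gam s) 0 hm Hx ltac:(lia) Hz).
Qed.

Lemma inv_sqrt_schw_factor_derive (m r : R) : 0 < m -> 2 * m < r ->
  is_derive (fun y => / sqrt (1 - 2 * m / y)) r
    (- (m / (r * (r - 2 * m))) / sqrt (1 - 2 * m / r)).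
Proof.
intros hm hr. assert (hf := schw_factor_pos m r hm hr).
assert (hsq : 0 < sqrt (1 - 2 * m / r)) by (apply sqrt_lt_R0; exact hf).
auto_derive; replace (1 + - (2 * m * / r)) with (1 - 2 * m / r) by (unfold Rdiv; ring).
- repeat split; lra.
- rewrite (sqrt_sqrt _ (Rlt_le _ _ hf)). field. repeat split; lra.
Qed.

Lemma Ustat_parallel (m : R) (gam vel : R -> coords) :
  0 < m -> is_curve_in_domain m gam vel ->
  (forall s, 0 <= s <= 1 -> vel s 0%nat = 0) ->
  is_parallel_along m gam vel (fun s => Ustat m (gam s)).
Proof.
intros hm Hc Ht s Hs a Ha. destruct (Hc s Hs) as [[hr _] Hd].
assert (hf := schw_factor_pos m (gam s 1%nat) hm hr).
assert (hsq : 0 < sqrt (1 - 2 * m / gam s 1%nat)) by (apply sqrt_lt_R0; exact hf).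
destruct a as [|a].
- exists (vel s 1%nat * (- (m / (gam s 1%nat * (gam s 1%nat - 2 * m)))
                          / sqrt (1 - 2 * m / gam s 1%nat))).
  split.
  + exact (@is_derive_comp R_AbsRing R_NormedModule (fun y => / sqrt (1 - 2 * m / y))
             (fun u => gam u 1%nat) s _ _ (inv_sqrt_schw_factor_derive m _ hm hr)
             (Hd 1%nat ltac:(lia))).
  + rewrite Chr_time_contract by assumption. cbn [Ustat Nat.eqb]. field. split; lra.
- exists 0. split.
  + apply (is_derive_ext (fun _ => 0)); [reflexivity|].
    apply (@is_derive_const R_AbsRing R_NormedModule).
  + destruct a as [|[|[|a]]]; try lia;
      unfold sum4, Chr; rewrite !dg_schw by assumption; cbn [schw_dg gdiag Ustat Nat.eqb];
      rewrite Ht by exact Hs; ring.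
Qed.

Lemma ginner_ext (m : R) (x w w' u u' : coords) :
  (forall a, (a < 4)%nat -> w a = w' a) -> (forall a, (a < 4)%nat -> u a = u' a) ->
  ginner m x w u = ginner m x w' u'.
Proof. intros Hw Hu. unfold ginner, sum4. rewrite !Hw, !Hu by lia. reflexivity. Qed.

Lemma ginner_Ustat_r (m : R) (x w : coords) :
  0 < m -> 2 * m < x 1%nat ->
  ginner m x w (Ustat m x) = - sqrt (1 - 2 * m / x 1%nat) * w 0%nat.
Proof.
intros hm hr. assert (hf := schw_factor_pos m (x 1%nat) hm hr).
assert (hsq : 0 < sqrt (1 - 2 * m / x 1%nat)) by (apply sqrt_lt_R0; exact hf).
unfold ginner, sum4, Ustat. cbn [gdiag Nat.eqb].
rewrite <- (sqrt_sqrt (1 - 2 * m / x 1%nat)) at 1 by lra.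
field. lra.
Qed.

Lemma ginner_Ustat_Ustat (m : R) (x : coords) :
  0 < m -> 2 * m < x 1%nat -> ginner m x (Ustat m x) (Ustat m x) = -1.
Proof.
intros hm hr. assert (hsq : 0 < sqrt (1 - 2 * m / x 1%nat))
  by (apply sqrt_lt_R0, schw_factor_pos; assumption).
rewrite ginner_Ustat_r by assumption. unfold Ustat; cbn [Nat.eqb]. field. lra.
Qed.

Lemma ginner_Ucirc_Ucirc (m r1 : R) (x : coords) :
  0 < m -> 3 * m < r1 -> x 1%nat = r1 -> x 2%nat = PI / 2 ->
  ginner m x (Ucirc m r1) (Ucirc m r1) = -1.
Proof.
intros hm hr1 Hr Hth.
assert (hf := schw_factor_pos m r1 hm ltac:(lra)).
assert (hA : 0 <= r1 / (r1 - 3 * m)) by (apply Rlt_le, Rdiv_lt_0_compat; lra).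
assert (hB : 0 <= m / (r1 - 3 * m)) by (apply Rlt_le, Rdiv_lt_0_compat; lra).
unfold ginner, sum4, Ucirc. cbn [gdiag]. rewrite Hr, Hth, sin_PI2.
transitivity (- (1 - 2 * m / r1) * (sqrt (r1 / (r1 - 3 * m)) * sqrt (r1 / (r1 - 3 * m)))
              + sqrt (m / (r1 - 3 * m)) * sqrt (m / (r1 - 3 * m))).
- field. lra.
- rewrite !sqrt_sqrt by assumption. field. lra.
Qed.

Lemma ginner_Ucirc_Ustat (m r1 : R) (x : coords) :
  0 < m -> 3 * m < r1 -> x 1%nat = r1 ->
  ginner m x (Ucirc m r1) (Ustat m x) = - sqrt ((r1 - 2 * m) / (r1 - 3 * m)).
Proof.
intros hm hr1 Hr.
assert (hf := schw_factor_pos m r1 hm ltac:(lra)).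
assert (hA : 0 <= r1 / (r1 - 3 * m)) by (apply Rlt_le, Rdiv_lt_0_compat; lra).
rewrite ginner_Ustat_r, Hr by lra. unfold Ucirc; cbv beta iota.
rewrite <- Ropp_mult_distr_l, <- sqrt_mult by lra.
do 2 f_equal. field. lra.
Qed.

Lemma ginner_scale_sub (m : R) (x w u : coords) (k : R) :
  ginner m x (fun a => k * w a - u a) (fun a => k * w a - u a)
  = k * k * ginner m x w w - 2 * k * ginner m x w u + ginner m x u u.
Proof. unfold ginner, sum4. ring. Qed.

Lemma ginner_vkin_unit (m : R) (x w u : coords) :
  ginner m x w w = -1 -> ginner m x u u = -1 -> ginner m x w u <> 0 ->
  ginner m x (vkin m x w u) (vkin m x w u) = 1 - / ginner m x w u ^ 2.
Proof.
intros Hw Hu Hwu. unfold vkin. rewrite ginner_scale_sub, Hw, Hu. field. exact Hwu.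
Qed.

Theorem mainTheorem4 (m r1 : R) (hm : 0 < m) (hr1 : 3 * m < r1)
  (gam vel acc V : R -> coords)
  (hq_r : gam 1 1%nat = r1) (hq_th : gam 1 2%nat = PI / 2)
  (hgeo : is_geodesic_segment m gam vel acc)
  (hspace : 0 < ginner m (gam 0) (vel 0) (vel 0))
  (horth : ginner m (gam 0) (vel 0) (Ustat m (gam 0)) = 0)
  (hpar : is_parallel_along m gam vel V)
  (hV1 : forall a, (a < 4)%nat -> V 1 a = Ucirc m r1 a) :
  let v := vkin m (gam 0) (V 0) (Ustat m (gam 0)) in
  ginner m (gam 0) v v = m / (r1 - 2 * m).
Proof.
intros v.
assert (Hc := geodesic_curve m gam vel acc hgeo).
destruct (Hc 0 ltac:(lra)) as [[hr0 _] _].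
assert (Hvel0 : vel 0 0%nat = 0).
{ rewrite ginner_Ustat_r in horth by assumption.
  assert (hsq := sqrt_lt_R0 _ (schw_factor_pos m _ hm hr0)). nra. }
assert (HU := Ustat_parallel m gam vel hm Hc
                (geodesic_static_slice m gam vel acc hm hgeo Hvel0)).
assert (HVV : ginner m (gam 0) (V 0) (V 0) = -1).
{ rewrite <- (ginner_parallel_const m gam vel V V hm Hc hpar hpar 1 ltac:(lra)).
  rewrite (ginner_ext m (gam 1) (V 1) (Ucirc m r1) (V 1) (Ucirc m r1)) by exact hV1.
  apply ginner_Ucirc_Ucirc; assumption. }
assert (HVU : ginner m (gam 0) (V 0) (Ustat m (gam 0)) = - sqrt ((r1 - 2 * m) / (r1 - 3 * m))).
{ assert (E := ginner_parallel_const m gam vel V _ hm Hc hpar HU 1 ltac:(lra)). cbv beta in E.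
  rewrite <- E, (ginner_ext m (gam 1) (V 1) (Ucirc m r1) _ _ hV1 (fun _ _ => eq_refl)).
  apply ginner_Ucirc_Ustat; assumption. }
assert (hq : 0 < (r1 - 2 * m) / (r1 - 3 * m)) by (apply Rdiv_lt_0_compat; lra).
assert (hsq := sqrt_lt_R0 _ hq).
unfold v. rewrite (ginner_vkin_unit m (gam 0) (V 0) (Ustat m (gam 0)) HVV
                    (ginner_Ustat_Ustat m (gam 0) hm hr0) ltac:(rewrite HVU; lra)).
rewrite HVU, <- Rsqr_pow2, <- Rsqr_neg, Rsqr_sqrt by lra.
field. lra.
Qed.
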